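(* Under the standing setup, fix a neighborhood $n$ with $p_n>0$ and $X_n\in(0,1)$, and let $\delta_{B,n}=\mathrm{Cov}(Y,X\mid N=n)$. (i) If $\delta_{B,n}\ge0$, then $D_n\in[0,D^+_{MOB,n}]$, $Y^1_n\in[Y_n,Y^{1+}_{MOB,n}]$ and $Y^0_n\in[Y^{0-}_{MOB,n},Y_n]$. (ii) If $\delta_{B,n}\le0$, then $D_n\in[D^-_{MOB,n},0]$, $Y^1_n\in[Y^{1-}_{MOB,n},Y_n]$ and $Y^0_n\in[Y_n,Y^{0+}_{MOB,n}]$. (iii) Each of these bounds is sharp under the respective sign assumption (absent additional information).
   Context: Let $(X,Y,N)$ be a random triple with $X\in\{0,1\}$, $Y$ real-valued, $N$ taking values in a finite set $\mathcal N$. Write $p_n=\Pr(N=n)$, $X_n=\mathbb E[X\mid N=n]$, $Y_n=\mathbb E[Y\mid N=n]$. Fix reals $\underline Y\le\overline Y$ and assume $\mathbb E[Y\mid X=x,N=n]\in[\underline Y,\overline Y]$ whenever $\Pr(X=x,N=n)>0$. Neighborhood group means $Y^x_n=\mathbb E[Y\mid X=x,N=n]$ and $D_n=Y^1_n-Y^0_n$. Neighborhood method-of-bounds quantities: $Y^{1+}_{MOB,n}=\min\{(Y_n-\underline Y(1-X_n))/X_n,\overline Y\}$, $Y^{0-}_{MOB,n}=\max\{(Y_n-\overline Y X_n)/(1-X_n),\underline Y\}$, $Y^{1-}_{MOB,n}=\max\{(Y_n-\overline Y(1-X_n))/X_n,\underline Y\}$, $Y^{0+}_{MOB,n}=\min\{(Y_n-\underline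 Y X_n)/(1-X_n),\overline Y\}$, $D^+_{MOB,n}=Y^{1+}_{MOB,n}-Y^{0-}_{MOB,n}$, $D^-_{MOB,n}=Y^{1-}_{MOB,n}-Y^{0+}_{MOB,n}$. Sharpness under an assumption $\mathcal A$: the parameter lies in the interval for every joint distribution satisfying the standing assumptions and $\mathcal A$, and every value in the interval is attained by some joint distribution of $(X,Y,N)$ with the same observed $(p_m,X_m,Y_m)_{m\in\mathcal N}$, satisfying the standing bound and $\mathcal A$. *)

From HB Require Import structures.
From mathcomp Require Import all_boot all_order all_algebra.
From mathcomp Require Import all_classical all_reals all_analysis.
Set Implicit Arguments. Unset Strict Implicit. Unset Printing Implicit Defensive.
Import Order.TTheory GRing.Theory Num.Theory.
Local Open Scope classical_set_scope.
Local Open Scope ring_scope.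

Section Defs.
Context {R : realType} {d : measure_display} {T : measurableType d}
        {I : finType}.
Variable (P : probability T R).

Definition nbhd (N : T -> I) (m : I) : set T := N @^-1` [set m].
Definition cell (X : T -> bool) (N : T -> I) (x : bool) (m : I) : set T :=
  nbhd N m `&` X @^-1` [set x].

Definition pr (A : set T) : R := fine (P A).
Definition cmean (A : set T) (f : T -> R) : R :=
  fine (\int[P]_(w in A) (f w)%:E) / pr A.

Definition p_obs (N : T -> I) m := pr (nbhd N m).
Definition X_obs (X : T -> bool) (N : T -> I) m :=
  cmean (nbhd N m) (fun w => (X w)%:R).
Definition Y_obs (Y : T -> R) (N : T -> I) m := cmean (nbhd N m) Y.

Definition Ygrp (X : T -> bool) (Y : T -> R) (N : T -> I) x m :=
  cmean (cell X N x m) Y.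
Definition Dgrp X Y N m := Ygrp X Y N true m - Ygrp X Y N false m.

Definition deltaB (X : T -> bool) (Y : T -> R) (N : T -> I) m :=
  cmean (nbhd N m) (fun w => Y w * (X w)%:R) - Y_obs Y N m * X_obs X N m.

Definition standing (X : T -> bool) (Y : T -> R) (N : T -> I) (Ylo Yhi : R) :=
  [/\ (forall m, measurable (nbhd N m)),
      measurable (X @^-1` [set true]),
      measurable_fun setT Y,
      P.-integrable setT (EFin \o Y) &
      forall x m, 0 < pr (cell X N x m) ->
        Ylo <= Ygrp X Y N x m <= Yhi].
End Defs.

Definition same_obs {R : realType} {d d' : measure_display}
  {T : measurableType d} {T' : measurableType d'} {I : finType}
  (P : probability T R) (X : T -> bool) (Y : T -> R) (N : T -> I)
  (P' : probability T' R) (X' : T' -> bool) (Y' : T' -> R) (N' : T' -> I) :=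
  forall m, [/\ p_obs P' N' m = p_obs P N m,
               X_obs P' X' N' m = X_obs P X N m &
               Y_obs P' Y' N' m = Y_obs P Y N m].

Section MOB.
Context {R : realType}.
Variables (Ylo Yhi Xn Yn : R).
Definition Y1p_MOB : R := Num.min ((Yn - Ylo * (1 - Xn)) / Xn) Yhi.
Definition Y0m_MOB : R := Num.max ((Yn - Yhi * Xn) / (1 - Xn)) Ylo.
Definition Y1m_MOB : R := Num.max ((Yn - Yhi * (1 - Xn)) / Xn) Ylo.
Definition Y0p_MOB : R := Num.min ((Yn - Ylo * Xn) / (1 - Xn)) Yhi.
Definition Dp_MOB : R := Y1p_MOB - Y0m_MOB.
Definition Dm_MOB : R := Y1m_MOB - Y0p_MOB.
End MOB.

(* Within neighborhood n, Y_n = X_n Y1 + (1 - X_n) Y0 and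
   Cov(Y, X | N = n) = X_n (1 - X_n) (Y1 - Y0). Everything is therefore a statement
   about "mixture pairs" (a, b) in [Ylo, Yhi]^2 with X_n a + (1 - X_n) b = Y_n: the
   first coordinates of mixture pairs fill [Y1m_MOB, Y1p_MOB], the second ones
   [Y0m_MOB, Y0p_MOB], and the sign of a - b is that of a - Y_n and of Y_n - b.
   Sharpness holds because every mixture pair is realized: redefine Y on {N = n}
   to be a on {X = 1} and b on {X = 0}; this changes no observed quantity. *)

From HB Require Import structures.
From mathcomp Require Import all_boot all_order all_algebra.
From mathcomp Require Import all_classical all_reals all_analysis.
From mathcomp Require Import ring lra measurable_realfun.
Set Implicit Arguments. Unset Strict Implicit. Unset Printing Implicit Defensive.
Import Order.TTheory GRing.Theory Num.Theory.
Local Open Scope classical_set_scope.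
Local Open Scope ring_scope.

Section MixtureBounds.
Context {R : realType}.
Variables (Ylo Yhi x yn : R).
Hypotheses (x_gt0 : 0 < x) (x_lt1 : x < 1).

Definition mixture_pair (a b : R) :=
  [/\ Ylo <= a <= Yhi, Ylo <= b <= Yhi & x * a + (1 - x) * b = yn].

Let x1_gt0 : 0 < 1 - x. Proof. by rewrite subr_gt0. Qed.
#[local] Hint Resolve x1_gt0 : core.

Lemma mixture_sub_mean a b : x * a + (1 - x) * b = yn ->
  a - yn = (1 - x) * (a - b) /\ yn - b = x * (a - b).
Proof. by move=> <-; split; ring. Qed.

Lemma mixture_geE a b : x * a + (1 - x) * b = yn ->
  ((b <= a) = (yn <= a)) * ((b <= a) = (b <= yn)).
Proof.
case/mixture_sub_mean=> e1 e0.
by rewrite -subr_ge0 -[yn <= a]subr_ge0 -[b <= yn]subr_ge0 e1 e0 !pmulr_rge0.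
Qed.

Lemma mixture_leE a b : x * a + (1 - x) * b = yn ->
  ((a <= b) = (a <= yn)) * ((a <= b) = (yn <= b)).
Proof.
case/mixture_sub_mean=> e1 e0.
by rewrite -subr_le0 -[a <= yn]subr_le0 -[yn <= b]subr_le0 e1 e0 !pmulr_rle0.
Qed.

Lemma mixture_pair_mean a b : mixture_pair a b -> Ylo <= yn <= Yhi.
Proof.
case=> /andP[la ua] /andP[lb ub] <-.
have la' : 0 <= x * (a - Ylo) by rewrite pmulr_rge0 ?subr_ge0.
have ua' : 0 <= x * (Yhi - a) by rewrite pmulr_rge0 ?subr_ge0.
have lb' : 0 <= (1 - x) * (b - Ylo) by rewrite pmulr_rge0 ?subr_ge0.
have ub' : 0 <= (1 - x) * (Yhi - b) by rewrite pmulr_rge0 ?subr_ge0.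
by apply/andP; split; lra.
Qed.

Lemma mixture_pair_Y1 a b : mixture_pair a b ->
  Y1m_MOB Ylo Yhi x yn <= a <= Y1p_MOB Ylo Yhi x yn.
Proof.
case=> /andP[la ua] /andP[lb ub] e.
have lo : 0 <= (1 - x) * (b - Ylo) by rewrite pmulr_rge0 ?subr_ge0.
have hi : 0 <= (1 - x) * (Yhi - b) by rewrite pmulr_rge0 ?subr_ge0.
rewrite /Y1m_MOB /Y1p_MOB ge_max le_min la ua !andbT.
by rewrite ler_pdivrMr // ler_pdivlMr //; apply/andP; split; lra.
Qed.

Lemma mixture_pair_Y0 a b : mixture_pair a b ->
  Y0m_MOB Ylo Yhi x yn <= b <= Y0p_MOB Ylo Yhi x yn.
Proof.
case=> /andP[la ua] /andP[lb ub] e.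
have lo : 0 <= x * (a - Ylo) by rewrite pmulr_rge0 ?subr_ge0.
have hi : 0 <= x * (Yhi - a) by rewrite pmulr_rge0 ?subr_ge0.
rewrite /Y0m_MOB /Y0p_MOB ge_max le_min lb ub !andbT.
by rewrite ler_pdivrMr // ler_pdivlMr //; apply/andP; split; lra.
Qed.

Lemma Y1_mixture_pair a : Y1m_MOB Ylo Yhi x yn <= a <= Y1p_MOB Ylo Yhi x yn ->
  mixture_pair a ((yn - x * a) / (1 - x)).
Proof.
rewrite /Y1m_MOB /Y1p_MOB ge_max le_min => /andP[/andP[la' la] /andP[ua' ua]].
move: la' ua'; rewrite ler_pdivrMr // ler_pdivlMr // => la' ua'.
split; first by rewrite la ua.
  by rewrite ler_pdivrMr // ler_pdivlMr //; apply/andP; split; lra.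
by rewrite [(1 - x) * _]mulrC divfK ?gt_eqF //; ring.
Qed.

Lemma Y0_mixture_pair b : Y0m_MOB Ylo Yhi x yn <= b <= Y0p_MOB Ylo Yhi x yn ->
  mixture_pair ((yn - (1 - x) * b) / x) b.
Proof.
rewrite /Y0m_MOB /Y0p_MOB ge_max le_min => /andP[/andP[lb' lb] /andP[ub' ub]].
move: lb' ub'; rewrite ler_pdivrMr // ler_pdivlMr // => lb' ub'.
split; last by rewrite [x * _]mulrC divfK ?gt_eqF //; ring.
  by rewrite ler_pdivrMr // ler_pdivlMr //; apply/andP; split; lra.
by rewrite lb ub.
Qed.

(* Whichever bound is active in Y1p_MOB (resp. Y1m_MOB) forces the complementary
   one in Y0m_MOB (resp. Y0p_MOB), so the extreme bounds form mixture pairs. *)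
Lemma MOB_mixture :
  x * Y1p_MOB Ylo Yhi x yn + (1 - x) * Y0m_MOB Ylo Yhi x yn = yn /\
  x * Y1m_MOB Ylo Yhi x yn + (1 - x) * Y0p_MOB Ylo Yhi x yn = yn.
Proof.
rewrite /Y1p_MOB /Y0m_MOB /Y1m_MOB /Y0p_MOB.
set A := (yn - Ylo * (1 - x)) / x; set B := (yn - Yhi * x) / (1 - x).
set A' := (yn - Yhi * (1 - x)) / x; set B' := (yn - Ylo * x) / (1 - x).
have eA : x * A = yn - Ylo * (1 - x) by rewrite mulrC divfK ?gt_eqF.
have eB : (1 - x) * B = yn - Yhi * x by rewrite mulrC divfK ?gt_eqF.
have eA' : x * A' = yn - Yhi * (1 - x) by rewrite mulrC divfK ?gt_eqF.
have eB' : (1 - x) * B' = yn - Ylo * x by rewrite mulrC divfK ?gt_eqF.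
split.
- case: (leP A Yhi) => hA.
    have hB : B <= Ylo.
      have hx : x * A <= x * Yhi by rewrite ler_pM2l.
      by rewrite -(ler_pM2l x1_gt0) eB; lra.
    by rewrite max_r // eA; ring.
  have hB : Ylo <= B.
    have hx : x * Yhi < x * A by rewrite ltr_pM2l.
    by rewrite -(ler_pM2l x1_gt0) eB; lra.
  by rewrite max_l // eB; ring.
- case: (leP A' Ylo) => hA.
    have hB : B' <= Yhi.
      have hx : x * A' <= x * Ylo by rewrite ler_pM2l.
      by rewrite -(ler_pM2l x1_gt0) eB'; lra.
    by rewrite min_l // eB'; ring.
  have hB : Yhi <= B'.
    have hx : x * Ylo < x * A' by rewrite ltr_pM2l.
    by rewrite -(ler_pM2l x1_gt0) eB'; lra.
  by rewrite min_r // eA'; ring.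
Qed.

Lemma mixture_bounds_ge a b : mixture_pair a b -> b <= a ->
  [/\ 0 <= a - b <= Dp_MOB Ylo Yhi x yn, yn <= a <= Y1p_MOB Ylo Yhi x yn &
      Y0m_MOB Ylo Yhi x yn <= b <= yn].
Proof.
move=> hab ba; have [_ _ e] := hab.
have /andP[_ a_hi] := mixture_pair_Y1 hab.
have /andP[b_lo _] := mixture_pair_Y0 hab.
have [ga gb] := mixture_geE e.
by rewrite /Dp_MOB subr_ge0 lerB // a_hi b_lo -ga -gb ba.
Qed.

Lemma mixture_bounds_le a b : mixture_pair a b -> a <= b ->
  [/\ Dm_MOB Ylo Yhi x yn <= a - b <= 0, Y1m_MOB Ylo Yhi x yn <= a <= yn &
      yn <= b <= Y0p_MOB Ylo Yhi x yn].
Proof.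
move=> hab ab; have [_ _ e] := hab.
have /andP[a_lo _] := mixture_pair_Y1 hab.
have /andP[_ b_hi] := mixture_pair_Y0 hab.
have [la lb] := mixture_leE e.
by rewrite /Dm_MOB subr_le0 lerB // a_lo b_hi -la -lb ab.
Qed.

Hypothesis yn_range : Ylo <= yn <= Yhi.

Let mean_pair : mixture_pair yn yn.
Proof. by split=> //; ring. Qed.

Lemma sharp_Y1_ge v : yn <= v <= Y1p_MOB Ylo Yhi x yn ->
  exists a b, [/\ mixture_pair a b, b <= a & a = v].
Proof.
case/andP=> lv uv; have /andP[lo _] := mixture_pair_Y1 mean_pair.
have hab : mixture_pair v ((yn - x * v) / (1 - x)).
  by apply: Y1_mixture_pair; rewrite (le_trans lo lv).
exists v, ((yn - x * v) / (1 - x)); split=> //.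
by have [_ _ e] := hab; rewrite (mixture_geE e).1.
Qed.

Lemma sharp_Y0_ge v : Y0m_MOB Ylo Yhi x yn <= v <= yn ->
  exists a b, [/\ mixture_pair a b, b <= a & b = v].
Proof.
case/andP=> lv uv; have /andP[_ hi] := mixture_pair_Y0 mean_pair.
have hab : mixture_pair ((yn - (1 - x) * v) / x) v.
  by apply: Y0_mixture_pair; rewrite lv (le_trans uv hi).
exists ((yn - (1 - x) * v) / x), v; split=> //.
by have [_ _ e] := hab; rewrite (mixture_geE e).2.
Qed.

Lemma sharp_Y1_le v : Y1m_MOB Ylo Yhi x yn <= v <= yn ->
  exists a b, [/\ mixture_pair a b, a <= b & a = v].
Proof.
case/andP=> lv uv; have /andP[_ hi] := mixture_pair_Y1 mean_pair.
have hab : mixture_pair v ((yn - x * v) / (1 - x)).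
  by apply: Y1_mixture_pair; rewrite lv (le_trans uv hi).
exists v, ((yn - x * v) / (1 - x)); split=> //.
by have [_ _ e] := hab; rewrite (mixture_leE e).1.
Qed.

Lemma sharp_Y0_le v : yn <= v <= Y0p_MOB Ylo Yhi x yn ->
  exists a b, [/\ mixture_pair a b, a <= b & b = v].
Proof.
case/andP=> lv uv; have /andP[lo _] := mixture_pair_Y0 mean_pair.
have hab : mixture_pair ((yn - (1 - x) * v) / x) v.
  by apply: Y0_mixture_pair; rewrite (le_trans lo lv).
exists ((yn - (1 - x) * v) / x), v; split=> //.
by have [_ _ e] := hab; rewrite (mixture_leE e).2.
Qed.

(* For a mixture pair, a - b = (a - yn) / (1 - x): the value v of D is reached
   through the value yn + (1 - x) v of Y1. *)
Lemma sharp_D_ge v : 0 <= v <= Dp_MOB Ylo Yhi x yn ->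
  exists a b, [/\ mixture_pair a b, b <= a & a - b = v].
Proof.
rewrite /Dp_MOB => /andP[lv uv].
have [/mixture_sub_mean [top _] _] := MOB_mixture.
have hv : yn <= yn + (1 - x) * v <= Y1p_MOB Ylo Yhi x yn.
  by rewrite lerDl pmulr_rge0 // lv -lerBrDl top ler_pM2l.
have [a [b [hab ba ea]]] := sharp_Y1_ge hv.
exists a, b; split=> //; have [_ _ /mixture_sub_mean [e _]] := hab.
by apply: (mulfI (lt0r_neq0 x1_gt0)); rewrite -e ea addrC addKr.
Qed.

Lemma sharp_D_le v : Dm_MOB Ylo Yhi x yn <= v <= 0 ->
  exists a b, [/\ mixture_pair a b, a <= b & a - b = v].
Proof.
rewrite /Dm_MOB => /andP[lv uv].
have [_ /mixture_sub_mean [bot _]] := MOB_mixture.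
have hv : Y1m_MOB Ylo Yhi x yn <= yn + (1 - x) * v <= yn.
  by rewrite gerDl pmulr_rle0 // uv andbT -lerBlDl bot ler_pM2l.
have [a [b [hab ab ea]]] := sharp_Y1_le hv.
exists a, b; split=> //; have [_ _ /mixture_sub_mean [e _]] := hab.
by apply: (mulfI (lt0r_neq0 x1_gt0)); rewrite -e ea addrC addKr.
Qed.
End MixtureBounds.

Lemma integral_cst_on {R : realType} {d : measure_display} {T : measurableType d}
    (P : probability T R) (A : set T) (f : T -> \bar R) (c : R) :
  measurable A -> (forall w, A w -> f w = c%:E) ->
  (\int[P]_(w in A) f w = (c * pr P A)%:E)%E.
Proof.
move=> mA fA; rewrite (eq_integral (cst c%:E)); last by move=> w /[!inE] /fA.
by rewrite integral_cst // EFinM /pr fineK // fin_num_measure.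
Qed.

Section Cells.
Context {R : realType} {d : measure_display} {T : measurableType d} {I : finType}.
Variables (P : probability T R) (X : T -> bool) (N : T -> I).
Hypotheses (mN : forall m, measurable (nbhd N m))
  (mX : measurable (X @^-1` [set true])).

Lemma measurable_fun_X : measurable_fun setT X.
Proof. by apply: (measurable_fun_bool true); rewrite setTI. Qed.

Lemma measurable_fun_natX : measurable_fun setT (fun w => (X w)%:R : R).
Proof.
rewrite (_ : (fun w => _) = fun w => if X w then 1 else 0).
  exact: measurable_fun_ifT measurable_fun_X _ _.
by apply/funext => w; case: (X w).
Qed.

Lemma measurable_cell x m : measurable (cell X N x m).
Proof.
apply: measurableI; first exact: mN.
by rewrite -[_ @^-1` _]setTI; exact: measurable_fun_X.
Qed.

Lemma nbhd_cellsU m : nbhd N m = cell X N true m `|` cell X N false m.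
Proof.
apply/seteqP; split=> w; rewrite /cell /=; first by case: (X w) => hw; [left | right].
by case=> -[].
Qed.

Lemma cells_disjoint m : cell X N true m `&` cell X N false m = set0.
Proof. by apply/seteqP; split=> // w [[_ h1] [_]]; rewrite /= h1. Qed.

Lemma integral_nbhd_cells (f : T -> \bar R) (m : I) : measurable_fun setT f ->
  (\int[P]_(w in nbhd N m) f w =
   \int[P]_(w in cell X N true m) f w + \int[P]_(w in cell X N false m) f w)%E.
Proof.
move=> mf; rewrite nbhd_cellsU integral_setU //; try exact: measurable_cell.
- exact: measurable_funS mf.
- exact/disj_set2P/cells_disjoint.
Qed.

Lemma pr_nbhd_cells m :
  pr P (nbhd N m) = pr P (cell X N true m) + pr P (cell X N false m).
Proof.
rewrite /pr nbhd_cellsU measureU ?cells_disjoint //; try exact: measurable_cell.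
by rewrite fineD // fin_num_measure //; exact: measurable_cell.
Qed.

Lemma X_obs_cells m : X_obs P X N m = pr P (cell X N true m) / p_obs P N m.
Proof.
rewrite /X_obs /cmean integral_nbhd_cells; last exact: measurableT_comp measurable_fun_natX.
rewrite (integral_cst_on P (c := 1) (measurable_cell true m)); last by move=> w [_ /= ->].
rewrite (integral_cst_on P (c := 0) (measurable_cell false m)); last by move=> w [_ /= ->].
by rewrite mul1r mul0r adde0.
Qed.

Lemma pr_cells m : 0 < p_obs P N m ->
  pr P (cell X N true m) = X_obs P X N m * p_obs P N m /\
  pr P (cell X N false m) = (1 - X_obs P X N m) * p_obs P N m.
Proof.
move=> hp; rewrite X_obs_cells divfK ?gt_eqF //; split=> //.
by rewrite mulrBl mul1r divfK ?gt_eqF // /p_obs pr_nbhd_cells addrC addKr.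
Qed.

Lemma pr_cells_gt0 m : 0 < p_obs P N m -> 0 < X_obs P X N m < 1 ->
  0 < pr P (cell X N true m) /\ 0 < pr P (cell X N false m).
Proof.
move=> hp /andP[x0 x1]; have [-> ->] := pr_cells hp.
by split; apply: mulr_gt0; rewrite // subr_gt0.
Qed.

Variables (Y : T -> R).
Hypotheses (mY : measurable_fun setT Y) (iY : P.-integrable setT (EFin \o Y)).

Lemma integral_cell x m : 0 < pr P (cell X N x m) ->
  (\int[P]_(w in cell X N x m) (Y w)%:E = (Ygrp P X Y N x m * pr P (cell X N x m))%:E)%E.
Proof.
move=> hp; rewrite /Ygrp /cmean divfK ?gt_eqF // fineK //.
apply: integrable_fin_num; first exact: measurable_cell.
exact: integrableS (measurable_cell x m) (@subsetT _ _) iY.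
Qed.

Section Mixture.
Variable (m : I).
Hypotheses (hp : 0 < p_obs P N m) (hx : 0 < X_obs P X N m < 1).

Lemma Y_obs_mixture : Y_obs P Y N m =
  X_obs P X N m * Ygrp P X Y N true m + (1 - X_obs P X N m) * Ygrp P X Y N false m.
Proof.
have [p1 p0] := pr_cells_gt0 hp hx; have [e1 e0] := pr_cells hp.
rewrite /Y_obs /cmean integral_nbhd_cells; last exact: measurableT_comp.
rewrite !integral_cell // e1 e0 -/(p_obs P N m) /=.
by move: (gt_eqF hp) => /negbT hp0; field.
Qed.

Lemma deltaB_mixture : deltaB P X Y N m =
  X_obs P X N m * (1 - X_obs P X N m) * (Ygrp P X Y N true m - Ygrp P X Y N false m).
Proof.
have [p1 p0] := pr_cells_gt0 hp hx; have [e1 _] := pr_cells hp.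
have mYX : measurable_fun setT (fun w => Y w * (X w)%:R).
  exact: measurable_funM mY measurable_fun_natX.
rewrite /deltaB Y_obs_mixture /cmean integral_nbhd_cells; last exact: measurableT_comp.
rewrite (integral_cst_on P (c := 0) (measurable_cell false m)); last first.
  by move=> w [_ /= ->]; rewrite mulr0.
rewrite mul0r adde0 (eq_integral (fun w => (Y w)%:E)); last first.
  by move=> w /[!inE] -[_ /= ->]; rewrite mulr1.
rewrite integral_cell // e1 -/(p_obs P N m) /=.
by move: (gt_eqF hp) => /negbT hp0; field.
Qed.
End Mixture.
End Cells.

Section Replace.
Context {R : realType} {d : measure_display} {T : measurableType d} {I : finType}.
Variables (P : probability T R) (X : T -> bool) (N : T -> I) (Y : T -> R).
Variables (n : I) (a b : R).

Definition Yreplace w := if N w == n then (if X w then a else b) else Y w.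

Hypotheses (mN : forall m, measurable (nbhd N m))
  (mX : measurable (X @^-1` [set true])) (mY : measurable_fun setT Y).

Lemma measurable_Yreplace : measurable_fun setT Yreplace.
Proof.
have mNn : measurable_fun setT (fun w => N w == n).
  apply: (measurable_fun_bool true); rewrite setTI.
  by rewrite (_ : _ @^-1` _ = nbhd N n) //; apply/seteqP; split=> w /eqP.
apply: measurable_fun_ifT => //.
exact: measurable_fun_ifT (measurable_fun_X mX) _ _.
Qed.

Lemma integrable_Yreplace : P.-integrable setT (EFin \o Y) ->
  P.-integrable setT (EFin \o Yreplace).
Proof.
move=> iY.
apply: (le_integrable measurableT (g := fun w => (`|Y w| + (`|a| + `|b|))%:E)).
- exact: measurableT_comp measurable_Yreplace.
- move=> w _ /=; rewrite lee_fin [leRHS]ger0_norm ?addr_ge0 //.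
  rewrite /Yreplace; case: (N w == n); [case: (X w) |];
    have := normr_ge0 a; have := normr_ge0 b; have := normr_ge0 (Y w).
  + by have := ler_norm a; lra.
  + by have := ler_norm b; lra.
  + by have := ler_norm (Y w); lra.
- exact (integrableD measurableT (integrable_norm iY)
    (finite_measure_integrable_cst P (`|a| + `|b|) measurableT)).
Qed.

Lemma integral_Yreplace_off (A : set T) m : m != n -> A `<=` nbhd N m ->
  (\int[P]_(w in A) (Yreplace w)%:E = \int[P]_(w in A) (Y w)%:E)%E.
Proof.
move=> mn An; apply: eq_integral => w /[!inE] /An Nw.
by rewrite /Yreplace Nw (negbTE mn).
Qed.

Lemma Ygrp_Yreplace_off x m : m != n -> Ygrp P X Yreplace N x m = Ygrp P X Y N x m.
Proof. by move=> mn; rewrite /Ygrp /cmean (integral_Yreplace_off mn) // => w []. Qed.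

Lemma Y_obs_Yreplace_off m : m != n -> Y_obs P Yreplace N m = Y_obs P Y N m.
Proof. by move=> mn; rewrite /Y_obs /cmean (integral_Yreplace_off mn). Qed.

Lemma Ygrp_Yreplace x : 0 < pr P (cell X N x n) ->
  Ygrp P X Yreplace N x n = if x then a else b.
Proof.
move=> hp; rewrite /Ygrp /cmean (integral_cst_on P (c := if x then a else b)).
- by rewrite /= mulfK ?gt_eqF.
- exact: measurable_cell.
- by move=> w [/= Nw Xw]; rewrite /Yreplace Nw eqxx Xw.
Qed.
End Replace.

Section Realize.
Context {R : realType} {d : measure_display} {T : measurableType d} {I : finType}.
Variables (P : probability T R) (X : T -> bool) (Y : T -> R) (N : T -> I).
Variables (Ylo Yhi : R) (n : I).
Hypotheses (hs : standing P X Y N Ylo Yhi) (hp : 0 < p_obs P N n)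
  (hx : 0 < X_obs P X N n < 1).

Local Notation Xn := (X_obs P X N n).
Local Notation Yn := (Y_obs P Y N n).

Lemma standing_mixture_pair :
  mixture_pair Ylo Yhi Xn Yn (Ygrp P X Y N true n) (Ygrp P X Y N false n).
Proof.
have [mN mX mY iY bnd] := hs; have [p1 p0] := pr_cells_gt0 mN mX hp hx.
by split; [exact: bnd | exact: bnd | rewrite (Y_obs_mixture mN mX mY iY hp hx)].
Qed.

Lemma realize_pair a b : mixture_pair Ylo Yhi Xn Yn a b ->
  [/\ standing P X (Yreplace X N Y n a b) N Ylo Yhi,
      same_obs P X Y N P X (Yreplace X N Y n a b) N,
      Ygrp P X (Yreplace X N Y n a b) N true n = a &
      Ygrp P X (Yreplace X N Y n a b) N false n = b].
Proof.
case=> ha hb e; have [mN mX mY iY bnd] := hs.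
have [p1 p0] := pr_cells_gt0 mN mX hp hx.
have mY' := measurable_Yreplace n a b mN mX mY.
have iY' := integrable_Yreplace (P := P) n a b mN mX mY iY.
have g1 := Ygrp_Yreplace Y a b mN mX p1.
have g0 := Ygrp_Yreplace Y a b mN mX p0.
split=> //.
- split=> // x m; have [->|mn] := eqVneq m n.
    by case: x; rewrite ?g1 ?g0.
  by rewrite Ygrp_Yreplace_off //; exact: bnd.
- move=> m; split=> //; have [->|mn] := eqVneq m n.
    by rewrite (Y_obs_mixture mN mX mY' iY' hp hx) g1 g0.
  exact: Y_obs_Yreplace_off.
Qed.

Lemma realize_ge (Q : R -> R -> Prop) :
  (exists a b, [/\ mixture_pair Ylo Yhi Xn Yn a b, b <= a & Q a b]) ->
  exists (d' : measure_display) (T' : measurableType d')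
    (P' : probability T' R) (X' : T' -> bool) (Y' : T' -> R) (N' : T' -> I),
    [/\ standing P' X' Y' N' Ylo Yhi, same_obs P X Y N P' X' Y' N',
        0 <= deltaB P' X' Y' N' n &
        Q (Ygrp P' X' Y' N' true n) (Ygrp P' X' Y' N' false n)].
Proof.
case=> a [b [hab ba hQ]]; have [hs' so g1 g0] := realize_pair hab.
exists d, T, P, X, (Yreplace X N Y n a b), N; split; rewrite ?g1 ?g0 //.
have [mN mX mY' iY' _] := hs'; have /andP[x0 x1] := hx.
rewrite (deltaB_mixture mN mX mY' iY' hp hx) g1 g0.
by rewrite pmulr_rge0 ?subr_ge0 // mulr_gt0 ?subr_gt0.
Qed.

Lemma realize_le (Q : R -> R -> Prop) :
  (exists a b, [/\ mixture_pair Ylo Yhi Xn Yn a b, a <= b & Q a b]) ->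
  exists (d' : measure_display) (T' : measurableType d')
    (P' : probability T' R) (X' : T' -> bool) (Y' : T' -> R) (N' : T' -> I),
    [/\ standing P' X' Y' N' Ylo Yhi, same_obs P X Y N P' X' Y' N',
        deltaB P' X' Y' N' n <= 0 &
        Q (Ygrp P' X' Y' N' true n) (Ygrp P' X' Y' N' false n)].
Proof.
case=> a [b [hab ab hQ]]; have [hs' so g1 g0] := realize_pair hab.
exists d, T, P, X, (Yreplace X N Y n a b), N; split; rewrite ?g1 ?g0 //.
have [mN mX mY' iY' _] := hs'; have /andP[x0 x1] := hx.
rewrite (deltaB_mixture mN mX mY' iY' hp hx) g1 g0.
by rewrite pmulr_rle0 ?subr_le0 // mulr_gt0 ?subr_gt0.
Qed.
End Realize.


Theorem proposition11 (R : realType) (d : measure_display)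
  (T : measurableType d) (I : finType) (P : probability T R)
  (X : T -> bool) (Y : T -> R) (N : T -> I) (Ylo Yhi : R) (n : I) :
  Ylo <= Yhi ->
  standing P X Y N Ylo Yhi ->
  0 < p_obs P N n ->
  0 < X_obs P X N n < 1 ->
  let Xn := X_obs P X N n in
  let Yn := Y_obs P Y N n in
  let Y1 := Ygrp P X Y N true n in
  let Y0 := Ygrp P X Y N false n in
  let D := Dgrp P X Y N n in
  let dB := deltaB P X Y N n in
  (* (i) *)
  (0 <= dB ->
     [/\ 0 <= D <= Dp_MOB Ylo Yhi Xn Yn,
         Yn <= Y1 <= Y1p_MOB Ylo Yhi Xn Yn &
         Y0m_MOB Ylo Yhi Xn Yn <= Y0 <= Yn]) /\
  (* (ii) *)
  (dB <= 0 ->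
     [/\ Dm_MOB Ylo Yhi Xn Yn <= D <= 0,
         Y1m_MOB Ylo Yhi Xn Yn <= Y1 <= Yn &
         Yn <= Y0 <= Y0p_MOB Ylo Yhi Xn Yn]) /\
  (* (iii) sharpness under delta_B >= 0 *)
  (0 <= dB ->
     [/\ (forall v, 0 <= v <= Dp_MOB Ylo Yhi Xn Yn ->
            exists (d' : measure_display) (T' : measurableType d')
              (P' : probability T' R) (X' : T' -> bool) (Y' : T' -> R)
              (N' : T' -> I),
              [/\ standing P' X' Y' N' Ylo Yhi, same_obs P X Y N P' X' Y' N',
                  0 <= deltaB P' X' Y' N' n & Dgrp P' X' Y' N' n = v]),
         (forall v, Yn <= v <= Y1p_MOB Ylo Yhi Xn Yn ->
            exists (d' : measure_display) (T' : measurableType d')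
              (P' : probability T' R) (X' : T' -> bool) (Y' : T' -> R)
              (N' : T' -> I),
              [/\ standing P' X' Y' N' Ylo Yhi, same_obs P X Y N P' X' Y' N',
                  0 <= deltaB P' X' Y' N' n & Ygrp P' X' Y' N' true n = v]) &
         (forall v, Y0m_MOB Ylo Yhi Xn Yn <= v <= Yn ->
            exists (d' : measure_display) (T' : measurableType d')
              (P' : probability T' R) (X' : T' -> bool) (Y' : T' -> R)
              (N' : T' -> I),
              [/\ standing P' X' Y' N' Ylo Yhi, same_obs P X Y N P' X' Y' N',
                  0 <= deltaB P' X' Y' N' n & Ygrp P' X' Y' N' false n = v])])
  /\
  (* (iii) sharpness under delta_B <= 0 *)
  (dB <= 0 ->
     [/\ (forall v, Dm_MOB Ylo Yhi Xn Yn <= v <= 0 ->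
            exists (d' : measure_display) (T' : measurableType d')
              (P' : probability T' R) (X' : T' -> bool) (Y' : T' -> R)
              (N' : T' -> I),
              [/\ standing P' X' Y' N' Ylo Yhi, same_obs P X Y N P' X' Y' N',
                  deltaB P' X' Y' N' n <= 0 & Dgrp P' X' Y' N' n = v]),
         (forall v, Y1m_MOB Ylo Yhi Xn Yn <= v <= Yn ->
            exists (d' : measure_display) (T' : measurableType d')
              (P' : probability T' R) (X' : T' -> bool) (Y' : T' -> R)
              (N' : T' -> I),
              [/\ standing P' X' Y' N' Ylo Yhi, same_obs P X Y N P' X' Y' N',
                  deltaB P' X' Y' N' n <= 0 & Ygrp P' X' Y' N' true n = v]) &
         (forall v, Yn <= v <= Y0p_MOB Ylo Yhi Xn Yn ->
            exists (d' : measure_display) (T' : measurableType d')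
              (P' : probability T' R) (X' : T' -> bool) (Y' : T' -> R)
              (N' : T' -> I),
              [/\ standing P' X' Y' N' Ylo Yhi, same_obs P X Y N P' X' Y' N',
                  deltaB P' X' Y' N' n <= 0 & Ygrp P' X' Y' N' false n = v])]).
Proof.
move=> _ hs hp hx; cbv zeta.
have [mN mX mY iY _] := hs; have /andP[x0 x1] := hx.
have pair := standing_mixture_pair hs hp hx.
have yn_range := mixture_pair_mean x0 x1 pair.
have dB := deltaB_mixture mN mX mY iY hp hx.
have Xn_pos : 0 < X_obs P X N n * (1 - X_obs P X N n) by rewrite mulr_gt0 ?subr_gt0.
have dB_ge : 0 <= deltaB P X Y N n -> Ygrp P X Y N false n <= Ygrp P X Y N true n.
  by rewrite dB pmulr_rge0 // subr_ge0.
have dB_le : deltaB P X Y N n <= 0 -> Ygrp P X Y N true n <= Ygrp P X Y N false n.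
  by rewrite dB pmulr_rle0 // subr_le0.
split; [|split; [|split]].
- by move=> /dB_ge /(mixture_bounds_ge x0 x1 pair).
- by move=> /dB_le /(mixture_bounds_le x0 x1 pair).
- move=> _; split=> v hv.
  + exact (realize_ge hs hp hx (Q := fun a b => a - b = v) (sharp_D_ge x0 x1 yn_range hv)).
  + exact (realize_ge hs hp hx (Q := fun a _ => a = v) (sharp_Y1_ge x0 x1 yn_range hv)).
  + exact (realize_ge hs hp hx (Q := fun _ b => b = v) (sharp_Y0_ge x0 x1 yn_range hv)).
- move=> _; split=> v hv.
  + exact (realize_le hs hp hx (Q := fun a b => a - b = v) (sharp_D_le x0 x1 yn_range hv)).
  + exact (realize_le hs hp hx (Q := fun a _ => a = v) (sharp_Y1_le x0 x1 yn_range hv)).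
  + exact (realize_le hs hp hx (Q := fun _ b => b = v) (sharp_Y0_le x0 x1 yn_range hv)).
Qed.
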